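(* Let $H_{\mathbb{C}}$ be the complex Heisenberg group of complex matrices $\begin{pmatrix}1&u_2&u_3\\0&1&u_1\\0&0&1\end{pmatrix}$. Let $\Lambda=\mathbb{Z}\langle1,e^{2\pi i/3}\rangle$ and $\Lambda'=\mathbb{Z}\langle1,i\rangle$ (Gaussian integers), and let $\Gamma_H$ (resp. $\Gamma_0$) be the subgroup of $H_{\mathbb{C}}$ of matrices with $u_1,u_2,u_3\in\Lambda$ (resp. $\in\Lambda'$). Let $N=\Gamma_H\backslash H_{\mathbb{C}}$ and let $N'=\Gamma_0\backslash H_{\mathbb{C}}$ be the Iwasawa manifold. Then $\pi_1(N)=\Gamma_H$ and $\pi_1(N')=\Gamma_0$ are not isomorphic groups; in particular $N$ and $N'$ are not diffeomorphic. *)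

From mathcomp Require Import all_boot all_order all_algebra all_field.
Set Implicit Arguments. Unset Strict Implicit. Unset Printing Implicit Defensive.
Import GRing.Theory Num.Theory.
Local Open Scope ring_scope.

(* e^{2 pi i / 3} = (-1 + i sqrt 3)/2 *)
Definition omega3 : algC := (-1 + 'i * sqrtC 3) / 2.

Definition in_lattice (w z : algC) : Prop :=
  exists a b : int, z = a%:~R + b%:~R * w.

Definition heis (u1 u2 u3 : algC) : 'M[algC]_3 :=
  \matrix_(i < 3, j < 3)
    if (i : nat) == j then 1
    else if ((i : nat) == 0%N) && ((j : nat) == 1%N) then u2
    else if ((i : nat) == 0%N) && ((j : nat) == 2%N) then u3
    else if ((i : nat) == 1%N) && ((j : nat) == 2%N) then u1
    else 0.

Definition Gamma (w : algC) (M : 'M[algC]_3) : Prop :=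
  exists u1 u2 u3, [/\ in_lattice w u1, in_lattice w u2, in_lattice w u3
                     & M = heis u1 u2 u3].

(* a group isomorphism from Gamma w to Gamma w' (given by a function on
   matrices whose behaviour outside Gamma w is irrelevant) *)
Definition group_iso (w w' : algC) (f : 'M[algC]_3 -> 'M[algC]_3) : Prop :=
  [/\ (forall M, Gamma w M -> Gamma w' (f M)),
      (forall M N, Gamma w M -> Gamma w N -> f M = f N -> M = N),
      (forall N, Gamma w' N -> exists2 M, Gamma w M & f M = N)
    & (forall M N, Gamma w M -> Gamma w N -> f (M *m N) = f M *m f N)].

From mathcomp Require Import all_boot all_order all_algebra all_field.
From mathcomp Require Import ring zify.
Set Implicit Arguments. Unset Strict Implicit. Unset Printing Implicit Defensive.
Import GRing.Theory Num.Theory.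
Local Open Scope ring_scope.

(* For w = ω or w = i, Z<1,w> is a ring and Γ_w is a group with centre
   {heis 0 0 t | t in Z<1,w>}; the commutators of x = heis a1 a2 a3 with
   Γ_w are the heis 0 0 (a2 b1 - b2 a1), i.e. they form the ideal (a1, a2)
   of Z<1,w> inside the centre Z<1,w>.  "Some x has commutator subgroup of index two in
   the centre" is invariant under isomorphism.  It holds in Γ_0 for
   x = heis (1+i) 0 0, since (1+i) has index 2 in Z[i], and fails in Γ_H,
   since 2 is inert in Z[ω], so no ideal of Z[ω] has index 2. *)

Lemma heis_mul a1 a2 a3 b1 b2 b3 :
  heis a1 a2 a3 *m heis b1 b2 b3 = heis (a1 + b1) (a2 + b2) (a3 + b3 + a2 * b1).
Proof.
apply/matrixP => i j; rewrite !mxE !big_ord_recr big_ord0 /= !mxE.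
by case: i => [[|[|[|i]]] Hi] //; case: j => [[|[|[|j]]] Hj] //=; ring.
Qed.

Lemma heis_inj a1 a2 a3 b1 b2 b3 :
  heis a1 a2 a3 = heis b1 b2 b3 -> [/\ a1 = b1, a2 = b2 & a3 = b3].
Proof.
move=> E; have entry i j := congr1 (fun M : 'M[algC]_3 => M i j) E.
move: (entry (@Ordinal 3 1 isT) (@Ordinal 3 2 isT)).
move: (entry (@Ordinal 3 0 isT) (@Ordinal 3 1 isT)).
move: (entry (@Ordinal 3 0 isT) (@Ordinal 3 2 isT)).
by rewrite !mxE /=.
Qed.

Lemma heis_commutator a1 a2 a3 b1 b2 b3 :
  heis a1 a2 a3 *m heis b1 b2 b3 =
  (heis b1 b2 b3 *m heis a1 a2 a3) *m heis 0 0 (a2 * b1 - b2 * a1).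
Proof. by rewrite !heis_mul; congr heis; ring. Qed.

Section Lattice.

Variable w : algC.

Lemma lattice0 : in_lattice w 0. Proof. by exists 0, 0; rewrite mul0r addr0. Qed.
Lemma lattice1 : in_lattice w 1. Proof. by exists 1, 0; rewrite mul0r addr0. Qed.
Lemma lattice_gen : in_lattice w w. Proof. by exists 0, 1; rewrite mul1r add0r. Qed.

Lemma latticeD x y : in_lattice w x -> in_lattice w y -> in_lattice w (x + y).
Proof.
by move=> [a [b ->]] [c [d ->]]; exists (a + c), (b + d); rewrite !rmorphD /=; ring.
Qed.

Lemma latticeN x : in_lattice w x -> in_lattice w (- x).
Proof. by move=> [a [b ->]]; exists (- a), (- b); rewrite !rmorphN /=; ring. Qed.

Definition quadratic_integer := exists p q : int, w * w = p%:~R + q%:~R * w.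

Hypothesis w_quadratic : quadratic_integer.

Lemma latticeM x y : in_lattice w x -> in_lattice w y -> in_lattice w (x * y).
Proof.
have [p [q w2]] := w_quadratic.
move=> [a [b ->]] [c [d ->]].
exists (a * c + b * d * p), (a * d + b * c + b * d * q).
rewrite !rmorphD !rmorphM /=.
transitivity (a%:~R * c%:~R + (a%:~R * d%:~R + b%:~R * c%:~R) * w
              + b%:~R * d%:~R * (w * w) : algC); first by ring.
by rewrite w2; ring.
Qed.

Lemma Gamma_mul M N : Gamma w M -> Gamma w N -> Gamma w (M *m N).
Proof.
move=> [a1 [a2 [a3 [la1 la2 la3 ->]]]] [b1 [b2 [b3 [lb1 lb2 lb3 ->]]]].
rewrite heis_mul; exists (a1 + b1), (a2 + b2), (a3 + b3 + a2 * b1).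
by split; do ?[exact: latticeD | exact: latticeM | apply: latticeD].
Qed.

End Lattice.

Lemma i_sq : 'i * 'i = -1 :> algC.
Proof. by rewrite -expr2 sqrCi. Qed.

Lemma omega3_sq : omega3 * omega3 = -1 - omega3.
Proof.
have s2 : sqrtC 3 * sqrtC 3 = 3 :> algC by rewrite -expr2 sqrtCK.
rewrite /omega3.
transitivity (-1 - (-1 + 'i * sqrtC 3) / 2
              + (3 + ('i * 'i) * (sqrtC 3 * sqrtC 3)) / 4 : algC); first by field.
by rewrite i_sq s2 mulN1r subrr mul0r addr0.
Qed.

Lemma quadratic_integer_omega3 : quadratic_integer omega3.
Proof. by exists (-1), (-1); rewrite omega3_sq !rmorphN /= rmorph1 mulN1r. Qed.

Section IndexTwoCommutators.

Variable w : algC.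

Definition central z := forall y, Gamma w y -> z *m y = y *m z.

Definition commutator_with x c := exists2 y, Gamma w y & x *m y = (y *m x) *m c.

(* The commutators with x form a proper subgroup of the centre of index at
   most two, i.e. of index exactly two. *)
Definition index_two_commutators x := exists z,
  [/\ Gamma w z, central z, ~ commutator_with x z
    & forall z', Gamma w z' -> central z' ->
        commutator_with x z' \/ commutator_with x (z' *m z)].

Lemma central_heis t : central (heis 0 0 t).
Proof. by move=> y [b1 [b2 [b3 [_ _ _ ->]]]]; rewrite !heis_mul; congr heis; ring. Qed.

Lemma Gamma_central_heis z : Gamma w z -> central z ->
  exists2 t, in_lattice w t & z = heis 0 0 t.
Proof.
move=> [z1 [z2 [z3 [_ _ lz3 ->]]]] cz.
have Gheis u1 u2 : in_lattice w u1 -> in_lattice w u2 -> Gamma w (heis u1 u2 0).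
  by move=> l1 l2; exists u1, u2, 0; split => //; apply: lattice0.
have := cz _ (Gheis _ _ (lattice1 w) (lattice0 w)).
rewrite !heis_mul => /heis_inj[_ _].
rewrite mulr1 mul0r !addr0 add0r addrC => /(canRL (addrK _)); rewrite subrr => ->.
have := cz _ (Gheis _ _ (lattice0 w) (lattice1 w)).
rewrite !heis_mul => /heis_inj[_ _].
rewrite mulr0 mul1r !addr0 add0r addrC => /esym/(canRL (addrK _)); rewrite subrr => ->.
by exists z3.
Qed.

Lemma commutator_with_heis a1 a2 a3 t :
  commutator_with (heis a1 a2 a3) (heis 0 0 t) <->
  exists b1 b2, [/\ in_lattice w b1, in_lattice w b2 & t = a2 * b1 - b2 * a1].
Proof.
split.
- move=> [_ [b1 [b2 [b3 [lb1 lb2 _ ->]]]]].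
  rewrite heis_commutator !heis_mul => /heis_inj[_ _].
  by rewrite !mulr0 !addr0 => /addrI t_eq; exists b1, b2.
- move=> [b1 [b2 [lb1 lb2 ->]]]; exists (heis b1 b2 0); last exact: heis_commutator.
  by exists b1, b2, 0; split => //; apply: lattice0.
Qed.

End IndexTwoCommutators.

Lemma index_two_commutators_transport w w' f x : quadratic_integer w ->
  group_iso w w' f -> Gamma w x ->
  index_two_commutators w' (f x) -> index_two_commutators w x.
Proof.
move=> wq [fG finj fsurj fM] Gx [z' [Gz' cz' ncz' index2]].
have GM := @Gamma_mul w wq.
have [z Gz fz] := fsurj _ Gz'.
have commutator_back c : Gamma w c ->
    commutator_with w' (f x) (f c) -> commutator_with w x c.
  move=> Gc [_ /fsurj[y Gy <-] E]; exists y => //.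
  by apply: finj; rewrite ?fM //; repeat apply: (GM).
have central_image c : Gamma w c -> central w c -> central w' (f c).
  by move=> Gc cc _ /fsurj[y Gy <-]; rewrite -!fM // cc.
exists z; split => //.
- move=> y Gy; apply: finj; try exact: (GM).
  by rewrite !fM // fz cz' //; apply: fG.
- move=> [y Gy E]; apply: ncz'; exists (f y); first exact: fG.
  rewrite -fz -!fM // ?E //; exact: (GM).
move=> c Gc cc.
case: (index2 _ (fG _ Gc) (central_image _ Gc cc)) => H; [left | right].
  exact: commutator_back.
by apply: commutator_back; [exact: (GM) | rewrite fM // fz].
Qed.

(* ω and ω + 1 are units of Z[ω], but in a quotient of order two one of them
   would vanish. *)
Lemma eisenstein_no_ideal_of_index_two (I : algC -> Prop) t0 :
  (forall s s', I s -> I s' -> I (s + s')) ->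
  (forall l s, in_lattice omega3 l -> I s -> I (l * s)) ->
  in_lattice omega3 t0 -> ~ I t0 ->
  ~ (forall t, in_lattice omega3 t -> I t \/ I (t + t0)).
Proof.
move=> ID IM lt0 It0 index2.
have IN s : I s -> I (- s).
  by rewrite -mulN1r; apply: IM; apply: latticeN; apply: lattice1.
have I1 : ~ I 1 by move=> I1; apply: It0; rewrite -[t0]mulr1; apply: IM.
have [Iw | Iwt0] := index2 _ (lattice_gen _).
  apply: I1; have -> : 1 = (-1 - omega3) * omega3 by rewrite mulrBl omega3_sq; ring.
  apply: IM => //; apply: latticeD; apply: latticeN; [exact: lattice1 | exact: lattice_gen].
have I1t0 : I (1 + t0) by case: (index2 _ (lattice1 _)).
have I2t0 : I (t0 + t0) by case: (index2 _ lt0).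
have Iw1 : I (omega3 + 1).
  have -> : omega3 + 1 = (omega3 + t0) + (1 + t0) + - (t0 + t0) by ring.
  exact: ID (ID _ _ Iwt0 I1t0) (IN _ I2t0).
apply: I1; have -> : 1 = - omega3 * (omega3 + 1) by rewrite mulrDr mulNr omega3_sq; ring.
apply: IM => //; apply: latticeN; exact: lattice_gen.
Qed.

Lemma not_index_two_commutators_eisenstein x :
  Gamma omega3 x -> ~ index_two_commutators omega3 x.
Proof.
have wq := quadratic_integer_omega3.
move=> [a1 [a2 [a3 [la1 la2 la3 ->]]]] [z [Gz cz nz index2]].
have [t0 lt0 z_eq] := Gamma_central_heis Gz cz; subst z.
pose I t := exists b1 b2,
  [/\ in_lattice omega3 b1, in_lattice omega3 b2 & t = a2 * b1 - b2 * a1].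
apply: (@eisenstein_no_ideal_of_index_two I t0) => //.
- move=> _ _ [b1 [b2 [lb1 lb2 ->]]] [c1 [c2 [lc1 lc2 ->]]].
  by exists (b1 + c1), (b2 + c2); split; [exact: latticeD | exact: latticeD | ring].
- move=> l _ ll [b1 [b2 [lb1 lb2 ->]]].
  by exists (l * b1), (l * b2); split; [exact: latticeM | exact: latticeM | ring].
- by move/commutator_with_heis.
move=> t lt; have Gt : Gamma omega3 (heis 0 0 t).
  by exists 0, 0, t; split => //; apply: lattice0.
case: (index2 _ Gt (central_heis _)); last rewrite heis_mul mulr0 !addr0.
  by move/commutator_with_heis; left.
by move/commutator_with_heis; right.
Qed.

Lemma gaussian_eq0 (p q : int) :
  p%:~R + q%:~R * 'i = 0 :> algC -> p = 0 /\ q = 0.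
Proof.
move=> pq0; suff /eqP : (p * p + q * q)%:~R = 0 :> algC by rewrite intr_eq0 => /eqP; nia.
transitivity ((p%:~R + q%:~R * 'i) * (p%:~R - q%:~R * 'i)
              + q%:~R * q%:~R * ('i * 'i + 1) : algC).
  by rewrite rmorphD !rmorphM /=; ring.
by rewrite pq0 i_sq; ring.
Qed.

Lemma gaussian_in_ideal_1pi (p q k : int) : p + q = 2 * k ->
  exists2 b, in_lattice 'i b & p%:~R + q%:~R * 'i = b * (1 + 'i).
Proof.
move=> pq; exists (k%:~R + (q - k)%:~R * 'i); first by exists k, (q - k).
have -> : p = 2 * k - q by lia.
rewrite !rmorphB rmorphM /=.
transitivity (k%:~R + (q%:~R - k%:~R) * ('i * 'i) + q%:~R * 'i : algC).
  by rewrite i_sq; ring.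
by ring.
Qed.

Lemma gaussian_one_notin_ideal_1pi b : in_lattice 'i b -> 1 <> b * (1 + 'i).
Proof.
move=> [r [s ->]] one_eq.
have [] := @gaussian_eq0 (r - s - 1) (r + s); last lia.
rewrite !rmorphB !rmorphD /= rmorph1.
transitivity ((r%:~R + s%:~R * 'i) * (1 + 'i) - 1 - s%:~R * ('i * 'i + 1) : algC).
  by ring.
by rewrite -one_eq i_sq subrr addNr mulr0 subr0.
Qed.

Lemma index_two_commutators_gaussian : index_two_commutators 'i (heis (1 + 'i) 0 0).
Proof.
have commutator_of_ideal t :
    (exists2 b, in_lattice 'i b & t = b * (1 + 'i)) ->
    commutator_with 'i (heis (1 + 'i) 0 0) (heis 0 0 t).
  move=> [b lb ->]; apply/commutator_with_heis; exists 0, (- b).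
  by split; [apply: lattice0 | apply: latticeN | ring].
exists (heis 0 0 1); split.
- by exists 0, 0, 1; split; [apply: lattice0 | apply: lattice0 | apply: lattice1 |].
- exact: central_heis.
- move/commutator_with_heis=> [b1 [b2 [_ lb2 one_eq]]].
  apply: (@gaussian_one_notin_ideal_1pi (- b2)); first exact: latticeN.
  by rewrite [LHS]one_eq; ring.
move=> z Gz cz; have [_ [p [q ->]] ->] := Gamma_central_heis Gz cz.
have [k [pq | pq]] : exists k, p + q = 2 * k \/ p + q = 2 * k + 1.
  by exists ((p + q) %/ 2)%Z; lia.
- by left; apply: commutator_of_ideal; apply: gaussian_in_ideal_1pi pq.
- right; rewrite heis_mul mulr0 !addr0; apply: commutator_of_ideal.
  have := @gaussian_in_ideal_1pi (p + 1) q (k + 1) ltac:(lia).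
  by rewrite rmorphD /= rmorph1 addrAC.
Qed.

Theorem proposition3p3 :
  ~ exists f : 'M[algC]_3 -> 'M[algC]_3, group_iso omega3 'i f.
Proof.
move=> [f iso]; have [_ _ fsurj _] := iso.
have Gx : Gamma 'i (heis (1 + 'i) 0 0).
  exists (1 + 'i), 0, 0; split; [| apply: lattice0 | apply: lattice0 |] => //.
  by exists 1, 1; rewrite !rmorph1 mul1r.
have [x Gx' fx] := fsurj _ Gx.
apply: (not_index_two_commutators_eisenstein Gx').
apply: (index_two_commutators_transport quadratic_integer_omega3 iso Gx').
rewrite fx; exact: index_two_commutators_gaussian.
Qed.
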